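(* Let $m\ge2$ and let $\mathcal{D}^b=(\Omega^b,\mathcal{B}^b)$ be the Boolean quadruple system of order $2^m$, and let $\mathcal{C}^b$ be the set of collinear triples of $\mathcal{D}^b$. Then $(\Omega^b,\mathcal{C}^b)$ is a regular two-graph and $\mathcal{D}^b$ satisfies property $(\triangle)$. Furthermore, for $\infty\in\Omega^b$, $\mathcal{L}_\infty(\mathcal{D}^b)\cong(\mathbb{F}_2)^m$ and $\pi_\infty(\mathcal{D}^b)$ is trivial.
   Context: The Boolean quadruple system of order $2^m$ has point set $\Omega^b=\mathbb{F}_2^m$ and line set $\mathcal{B}^b$ consisting of all $4$-subsets $\{v_1,v_2,v_3,v_4\}$ with $\sum v_i=0$; it is a supersimple $2$-$(2^m,4,2^{m-1}-1)$ design. A collinear triple is a $3$-subset contained in a line. $(\Omega,\mathcal{C})$ is a regular two-graph if it is a $2$-$(n,3,\mu)$ design and every $4$-subset contains $0,2$ or $4$ members of $\mathcal{C}$. Property $(\triangle)$: if $B_1,B_2\in\mathcal{B}$ with $|B_1\cap B_2|=2$ then $B_1\triangle B_2\in\mathcal{B}$. For distinct $a,b$ with lines $\{a,b,a_i,b_i\}$ through them, $[a,b]:=(a,b)\prod_i(a_i,b_i)$, $[a,a]:=1$; products left to right, $[a_0,\dots,a_k]:=[a_0,a_1]\cdots[a_{k-1},a_k]$; $\mathcal{L}_\infty$ = move sequences starting at $\infty$, $\pi_\infty$ = move sequences starting and ending at $\infty$. *)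

From HB Require Import structures.
From mathcomp Require Import all_boot all_order all_algebra all_fingroup.
Set Implicit Arguments. Unset Strict Implicit. Unset Printing Implicit Defensive.

(* A design: point set = the finType T, line set B : {set {set T}}. *)
Section Designs.
Variable T : finType.
Implicit Types (B C : {set {set T}}) (a b x : T).

Definition collinear_triples B : {set {set T}} :=
  [set S : {set T} | (#|S| == 3) && [exists L in B, S \subset L]].

Definition two_design_3 C (mu : nat) : Prop :=
  (forall S, S \in C -> #|S| = 3) /\
  (forall x y : T, x != y -> #|[set S in C | (x \in S) && (y \in S)]| = mu).

Definition regular_two_graph C : Prop :=
  (exists mu, two_design_3 C mu) /\
  (forall X : {set T}, #|X| = 4 ->
     #|[set S in C | S \subset X]| \in [:: 0; 2; 4]).

Definition prop_triangle B : Prop :=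
  forall B1 B2 : {set T}, B1 \in B -> B2 \in B -> #|B1 :&: B2| = 2 ->
    (B1 :\: B2) :|: (B2 :\: B1) \in B.

Definition other_pair (L : {set T}) a b : T * T :=
  let s := enum (L :\ a :\ b) in (nth a s 0, nth a s 1).

(* the move [a,b] = (a,b) prod_i (a_i,b_i), over the lines {a,b,a_i,b_i};
   [a,a] = 1.  Permutations are multiplied left to right (mathcomp: (s*t) x = t (s x)). *)
Definition move B a b : {perm T} :=
  if a == b then 1%g
  else (tperm a b * \prod_(L in B | (a \in L) && (b \in L))
                      tperm (other_pair L a b).1 (other_pair L a b).2)%g.

Fixpoint move_seq B (s : seq T) : {perm T} :=
  match s with
  | a :: ((b :: _) as s') => (move B a b * move_seq B s')%g
  | _ => 1%g
  end.

Definition in_L_inf B (inf : T) (g : {perm T}) : Prop :=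
  exists s : seq T, g = move_seq B (inf :: s).

Definition in_pi_inf B (inf : T) (g : {perm T}) : Prop :=
  exists s : seq T, last inf s = inf /\ g = move_seq B (inf :: s).

End Designs.

Definition boolean_lines (m : nat) : {set {set 'rV['F_2]_m}} :=
  [set L : {set 'rV['F_2]_m} | (#|L| == 4) && ((\sum_(v in L) v) == 0)%R].

From mathcomp Require Import all_boot all_order all_algebra all_fingroup.
Set Implicit Arguments. Unset Strict Implicit. Unset Printing Implicit Defensive.
Import GRing.Theory.

(* In an elementary abelian 2-group V, three distinct points a, b, c lie on
   exactly one zero-sum quadruple, namely {a, b, c, a + b + c}.  Hence every
   3-subset is collinear, so the collinear triples form the complete (and thus
   regular) two-graph, and the symmetric difference of two lines meeting in two
   points again sums to zero.  Moreover the move [a, b] sends x to x + a + b: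
   it swaps a and b, and every other x is swapped with a + b + x along the
   unique line through a, b and x.  So a move sequence from inf to z is the
   translation by inf + z; these translations form a copy of V, and a sequence
   returning to inf is the identity. *)

Section PermProducts.
Variable T : finType.
Local Open Scope group_scope.

Lemma prod_perm_fix (I : eqType) (r : seq I) (P : pred I) (F : I -> {perm T}) x :
  (forall i, i \in r -> P i -> F i x = x) -> (\prod_(i <- r | P i) F i) x = x.
Proof.
move=> Fx; rewrite big_seq_cond.
apply: (big_ind (fun p : {perm T} => p x = x)) => [|p q px qx|i /andP[ir Pi]].
- exact: perm1.
- by rewrite permM px qx.
- exact: Fx.
Qed.

Lemma prod_perm_single (I : eqType) (r : seq I) (P : pred I) (F : I -> {perm T})
    i0 x y :
  uniq r -> i0 \in r -> P i0 -> F i0 x = y ->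
  (forall i, i \in r -> P i -> i != i0 -> F i x = x /\ F i y = y) ->
  (\prod_(i <- r | P i) F i) x = y.
Proof.
move=> uniq_r i0r; case/splitPr: i0r uniq_r => r1 r2.
rewrite cat_uniq /= negb_or => /and4P[_ /andP[i0r1 _] i0r2 _].
move=> Pi0 Fi0 Fxy; rewrite big_cat big_cons Pi0 !permM.
have neq_i0 i (r' : seq I) : i0 \notin r' -> i \in r' -> i != i0.
  by move=> i0r' ir'; apply: contraNneq i0r' => <-.
rewrite (@prod_perm_fix _ r1) => [|i ir1 Pi]; last first.
  by have [] := Fxy i _ Pi (neq_i0 _ _ i0r1 ir1); rewrite // mem_cat ir1.
rewrite Fi0 prod_perm_fix // => i ir2 Pi.
by have [] := Fxy i _ Pi (neq_i0 _ _ i0r2 ir2); rewrite // mem_cat inE ir2 !orbT.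
Qed.

Lemma other_pairP (L : {set T}) a b : #|L :\ a :\ b| = 2 ->
  [/\ (other_pair L a b).1 \in L :\ a :\ b, (other_pair L a b).2 \in L :\ a :\ b
    & (other_pair L a b).1 != (other_pair L a b).2].
Proof.
rewrite /other_pair cardE => size2 /=.
have s_uniq := enum_uniq (mem (L :\ a :\ b)).
by split; [rewrite -mem_enum mem_nth ?size2 ..|rewrite nth_uniq ?size2].
Qed.

Lemma tperm_other_pair (L : {set T}) a b x y : x != y ->
  L :\ a :\ b = [set x; y] ->
  tperm (other_pair L a b).1 (other_pair L a b).2 x = y.
Proof.
move=> xy defL; have := @other_pairP L a b; rewrite defL cards2 xy => /(_ erefl).
rewrite !inE; case=> /orP[]/eqP-> /orP[]/eqP->; rewrite ?eqxx // => _.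
- exact: tpermL.
- exact: tpermR.
Qed.

End PermProducts.

Lemma injm_actpermR (gT : finGroupType) :
  ('injm (actperm 'R : {morphism [set: gT] >-> {perm gT}}))%g.
Proof. by apply/injmP => x y _ _ /permP/(_ 1%g); rewrite !actpermE /= !mul1g. Qed.

Section Triples.
Variable T : finType.

Definition triples : {set {set T}} := [set S : {set T} | #|S| == 3].

Lemma triple_through (S : {set T}) x y : #|S| = 3 -> x \in S -> y \in S ->
  x != y -> exists2 z, z \notin [set x; y] & S = [set x; y; z].
Proof.
move=> S3 xS yS xy.
have yS' : y \in S :\ x by rewrite !inE eq_sym xy.
have /cards1P[z Sz] : #|S :\ x :\ y| == 1.
  by move: S3; rewrite (cardsD1 x) xS (cardsD1 y) yS' !add1n => -[->].
have : z \in S :\ x :\ y by rewrite Sz set11.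
rewrite !inE => /and3P[zy zx _]; exists z; first by rewrite !inE negb_or zx zy.
rewrite -(setD1K xS) -(setD1K yS') Sz.
by apply/setP => v; rewrite !inE orbA.
Qed.

Lemma card_triples_through x y : x != y ->
  #|[set S in triples | (x \in S) && (y \in S)]| = (#|T| - 2)%N.
Proof.
move=> xy.
have -> : [set S in triples | (x \in S) && (y \in S)] =
          [set [set x; y; z] | z in ~: [set x; y]].
  apply/setP => S; rewrite !inE; apply/idP/imsetP => [/and3P[/eqP S3 xS yS]|].
    by have [z zxy ->] := triple_through S3 xS yS xy; exists z; rewrite ?in_setC.
  case=> z; rewrite in_setC => zxy ->.
  by rewrite setUC cardsU1 zxy cards2 xy !inE !eqxx !orbT.
rewrite card_in_imset; first by rewrite cardsCs setCK cards2 xy.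
move=> z1 z2; rewrite !inE !negb_or => /andP[z1x z1y] _ /setP/(_ z1).
by rewrite !inE eqxx (negbTE z1x) (negbTE z1y) orbT => /esym/eqP.
Qed.

Lemma card_triples_sub (X : {set T}) : #|X| = 4 ->
  #|[set S in triples | S \subset X]| = 4.
Proof.
move=> X4; rewrite -[4]/'C(4, 3) -X4 -cards_draws.
by apply: eq_card => S; rewrite !inE andbC.
Qed.

Lemma regular_two_graph_triples : regular_two_graph triples.
Proof.
split; last by move=> X /card_triples_sub ->.
exists (#|T| - 2)%N; split; last exact: card_triples_through.
by move=> S; rewrite inE => /eqP.
Qed.

End Triples.

Section ZeroSumQuadruples.
Variable V : finZmodType.
Hypothesis addvv : forall v : V, (v + v = 0)%R.
Local Open Scope ring_scope.
Implicit Types (a b c x : V) (L : {set V}).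

Definition zero_sum_quads : {set {set V}} :=
  [set L : {set V} | (#|L| == 4) && (\sum_(v in L) v == 0)].

Lemma oppv a : - a = a.
Proof. by apply/eqP; rewrite eq_sym -addr_eq0 addvv. Qed.

Lemma addKv a b : a + (a + b) = b.
Proof. by rewrite -{1}(oppv a) addKr. Qed.

Lemma addv_eq0 a b : (a + b == 0) = (a == b).
Proof. by rewrite addr_eq0 oppv. Qed.

Lemma fourth_pointE a b c :
  [/\ (a + b + c == a) = (b == c), (a + b + c == b) = (a == c)
    & (a + b + c == c) = (a == b)].
Proof.
split.
- by rewrite -addrA -[X in _ == X]addr0 (inj_eq (addrI a)) addv_eq0.
- by rewrite (addrC a) -addrA -[X in _ == X]addr0 (inj_eq (addrI b)) addv_eq0.
- by rewrite -[X in _ == X]add0r (inj_eq (addIr c)) addv_eq0.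
Qed.

Lemma quad_uniq a b c : a != b -> a != c -> b != c ->
  uniq [:: a; b; c; a + b + c].
Proof.
have [da db dc] := fourth_pointE a b c.
by move=> ab ac bc /=; rewrite !inE !negb_or !(eq_sym _ (a + b + c)) da db dc ab ac bc.
Qed.

Lemma quad_zero_sum a b c : a != b -> a != c -> b != c ->
  [set a; b; c; a + b + c] \in zero_sum_quads.
Proof.
move=> ab ac bc; have quniq := quad_uniq ab ac bc.
have memq : [set a; b; c; a + b + c] =i [:: a; b; c; a + b + c].
  by move=> v; rewrite !inE !orbA.
rewrite inE (eq_card memq) (card_uniqP quniq) /= (eq_bigl _ _ memq) -big_uniq //=.
by rewrite !big_cons big_nil addr0 2!addrA addvv.
Qed.

Lemma zero_sum_quad_eq L a b c : L \in zero_sum_quads ->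
  a \in L -> b \in L -> c \in L -> a != b -> a != c -> b != c ->
  L = [set a; b; c; a + b + c].
Proof.
rewrite inE => /andP[/eqP L4 /eqP L0] aL bL cL ab ac bc.
have bL' : b \in L :\ a by rewrite !inE eq_sym ab.
have cL' : c \in L :\ a :\ b by rewrite !inE eq_sym bc eq_sym ac.
have /cards1P[d Ld] : #|L :\ a :\ b :\ c| == 1.
  by move: L4; rewrite (cardsD1 a) aL (cardsD1 b) bL' (cardsD1 c) cL' !add1n => -[->].
have dE : d = a + b + c.
  apply/eqP; rewrite -addv_eq0 -L0 (big_setD1 a) // (big_setD1 b) //.
  by rewrite (big_setD1 c) // Ld big_set1 /= [d + _]addrC !addrA.
rewrite -(setD1K aL) -(setD1K bL') -(setD1K cL') Ld dE.
by apply/setP => v; rewrite !inE !orbA.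
Qed.

Lemma collinear_zero_sum_quads : collinear_triples zero_sum_quads = triples V.
Proof.
apply/setP => S; rewrite !inE andb_idr // => /eqP S3.
have [a aS] : exists a, a \in S by apply/set0Pn; rewrite -card_gt0 S3.
have /cards2P[b [c [bc Sa]]] : #|S :\ a| == 2.
  by move: S3; rewrite (cardsD1 a) aS add1n => -[->].
have : a \notin S :\ a by rewrite !inE eqxx.
rewrite Sa !inE negb_or => /andP[ab ac].
apply/existsP; exists [set a; b; c; a + b + c]; rewrite quad_zero_sum //=.
rewrite -(setD1K aS) Sa; apply/subsetP => v.
by rewrite !inE -!orbA => /or3P[]->; rewrite ?orbT.
Qed.

Lemma symdiff_zero_sum_quads : prop_triangle zero_sum_quads.
Proof.
move=> B1 B2; rewrite !inE => /andP[/eqP B1_4 /eqP B1_0] /andP[/eqP B2_4 /eqP B2_0] B12.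
have disj : [disjoint B1 :\: B2 & B2 :\: B1].
  rewrite -setI_eq0; apply/eqP/setP => v.
  by rewrite !inE; case: (v \in B1); case: (v \in B2).
have half1 : \sum_(v in B1 :\: B2) v = \sum_(v in B1 :&: B2) v.
  by apply/eqP; rewrite -addv_eq0 addrC -big_setID B1_0.
have half2 : \sum_(v in B2 :\: B1) v = \sum_(v in B1 :&: B2) v.
  by apply/eqP; rewrite -addv_eq0 addrC setIC -big_setID B2_0.
rewrite cardsU (disjoint_setI0 disj) cards0 subn0 !cardsD B1_4 B2_4 B12 setIC B12 /=.
rewrite (eq_bigl [predU B1 :\: B2 & B2 :\: B1]) => [|v]; last by rewrite !inE.
by rewrite bigU //= half1 half2 addvv.
Qed.

Lemma card_zero_sum_quadD2 L a b : L \in zero_sum_quads ->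
  a \in L -> b \in L -> a != b -> #|L :\ a :\ b| = 2.
Proof.
rewrite inE => /andP[/eqP L4 _] aL bL ab.
have bL' : b \in L :\ a by rewrite !inE eq_sym ab.
by move: L4; rewrite (cardsD1 a) aL (cardsD1 b) bL' !add1n => -[].
Qed.

Lemma quadD2 a b x : a != b -> a != x -> b != x ->
  [set a; b; x; a + b + x] :\ a :\ b = [set x; a + b + x].
Proof.
move=> ab ax bx; have [da db _] := fourth_pointE a b x.
apply/setP => v; rewrite !inE.
have [->|_] := eqVneq v a.
  by rewrite /= (negbTE ax) [a == _ + x]eq_sym da andbF (negbTE bx).
have [->|_] := eqVneq v b.
  by rewrite /= (negbTE bx) [b == _ + x]eq_sym db (negbTE ax).
by [].
Qed.

Lemma zero_sum_quad_avoid L a b x : L \in zero_sum_quads -> a \in L -> b \in L ->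
  a != b -> a != x -> b != x -> L != [set a; b; x; a + b + x] ->
  x \notin L /\ a + b + x \notin L.
Proof.
move=> LB aL bL ab ax bx L_quad; have [da db _] := fourth_pointE a b x.
have xL : x \notin L by apply: contra L_quad => xL; apply/eqP/zero_sum_quad_eq.
split=> //; apply: contra xL => dL.
have ad : a != a + b + x by rewrite eq_sym da.
have bd : b != a + b + x by rewrite eq_sym db.
by rewrite (zero_sum_quad_eq LB aL bL dL ab ad bd) addrA addvv add0r !inE eqxx orbT.
Qed.

Lemma move_zero_sum_quads a b : move zero_sum_quads a b = actperm 'R (a + b).
Proof.
apply/permP => x; rewrite actpermE /= FinRing.zmodMgE /move.
have [<-|ab] := eqVneq a b; first by rewrite perm1 addvv addr0.
rewrite permM.
have swap_fix L z : L \in zero_sum_quads -> a \in L -> b \in L ->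
    z \notin L :\ a :\ b -> tperm (other_pair L a b).1 (other_pair L a b).2 z = z.
  move=> LB aL bL zL; have [p1 p2 _] := other_pairP (card_zero_sum_quadD2 LB aL bL ab).
  by rewrite tpermD //; apply: contraNneq zL => <-.
have [->|xa] := eqVneq x a.
  rewrite tpermL prod_perm_fix ?addKv // => L _ /andP[LB /andP[aL bL]].
  by apply: swap_fix; rewrite // !inE eqxx.
have [->|xb] := eqVneq x b.
  rewrite tpermR prod_perm_fix ?(addrC a) ?addKv // => L _ /andP[LB /andP[aL bL]].
  by apply: swap_fix; rewrite // !inE eqxx /= andbF.
have ax : a != x by rewrite eq_sym.
have bx : b != x by rewrite eq_sym.
have [_ _ dx] := fourth_pointE a b x.
rewrite tpermD 1?eq_sym // [x + _]addrC.
apply: (prod_perm_single (i0 := [set a; b; x; a + b + x])).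
- exact: index_enum_uniq.
- exact: mem_index_enum.
- by rewrite quad_zero_sum // !inE !eqxx !orbT.
- by apply: tperm_other_pair (quadD2 ab ax bx); rewrite eq_sym dx.
move=> L _ /andP[LB /andP[aL bL]] /(zero_sum_quad_avoid LB aL bL ab ax bx)[xL dL].
by split; apply: swap_fix; rewrite // !inE ?(negbTE xL) ?(negbTE dL) !andbF.
Qed.

Lemma move_seq_zero_sum_quads a s :
  move_seq zero_sum_quads (a :: s) = actperm 'R (a + last a s).
Proof.
elim: s a => [|b s IH] a; first by rewrite addvv -FinRing.zmod1gE morph1.
rewrite -[LHS]/(move zero_sum_quads a b * move_seq zero_sum_quads (b :: s))%g.
rewrite move_zero_sum_quads IH -morphM ?inE //=.
by rewrite FinRing.zmodMgE -addrA addKv.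
Qed.

Lemma L_inf_zero_sum_quads inf : exists G : {group {perm V}},
  (forall g, g \in G <-> in_L_inf zero_sum_quads inf g) /\ (G \isog [set: V])%g.
Proof.
exists (actperm 'R @* [set: V])%G; split => [g|].
  rewrite /= morphimEdom; split => [/imsetP[v _ ->] | [s ->]].
    by exists [:: inf + v]; rewrite move_seq_zero_sum_quads /= addKv.
  by rewrite move_seq_zero_sum_quads imset_f ?inE.
by rewrite isog_sym sub_isog ?injm_actpermR.
Qed.

Lemma pi_inf_zero_sum_quads inf g : in_pi_inf zero_sum_quads inf g -> g = 1%g.
Proof.
case=> s [s_inf ->].
by rewrite move_seq_zero_sum_quads s_inf addvv -FinRing.zmod1gE morph1.
Qed.

End ZeroSumQuadruples.

Lemma addvv_F2 m (v : 'rV['F_2]_m) : (v + v = 0)%R.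
Proof. by apply/rowP => i; rewrite !mxE addrr_pchar2 // pchar_Fp. Qed.

Theorem lemma2p8 (m : nat) (hm : 2 <= m) (inf : 'rV['F_2]_m) :
  regular_two_graph (collinear_triples (boolean_lines m)) /\
  prop_triangle (boolean_lines m) /\
  (exists G : {group {perm 'rV['F_2]_m}},
      (forall g, g \in G <-> in_L_inf (boolean_lines m) inf g) /\
      (G \isog [set: 'rV['F_2]_m])%g) /\
  (forall g, in_pi_inf (boolean_lines m) inf g -> g = 1%g).
Proof.
have addvv := @addvv_F2 m.
split.
  by rewrite (collinear_zero_sum_quads addvv); apply: regular_two_graph_triples.
split; first exact: symdiff_zero_sum_quads addvv.
split; first exact: L_inf_zero_sum_quads addvv inf.
exact: pi_inf_zero_sum_quads addvv inf.
Qed.
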